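(* Let $(c_t)_{t=0}^\infty\subset\mathbb{S}^1$ be a sequence of unit vectors in $\mathbb{R}^2$ and $\omega:\mathsf{P}^2_+\to\mathbb{R}_{\ge0}$ a function with $\omega(X)\le C\sqrt{\lambda_{\max}(X)}$ for all $X\in\mathsf{P}^2_+$, for some constant $C>0$. Let $\lambda_0\ge4\sqrt2\,C+2$ and define $V_t\in\mathbb{R}^{2\times2}$ by $$V_0=\lambda_0\mathbb{I}_{2\times2},\qquad V_{t+1}=V_t+\omega(V_t)\big(a^+_{t+1}(a^+_{t+1})^{\mathsf T}+a^-_{t+1}(a^-_{t+1})^{\mathsf T}\big),$$ where $$a^\pm_{t+1}=\frac{c_t\pm\frac{1}{\sqrt{\lambda_{\min}(V_t)}}v_{t,\min}}{\sqrt{1\pm\frac{2\langle c_t,v_{t,\min}\rangle}{\sqrt{\lambda_{\min}(V_t)}}+\frac{1}{\lambda_{\min}(V_t)}}}$$ and $v_{t,\min}$ is a normalized eigenvector of $V_t$ for its minimum eigenvalue. Then $\lambda_{\min}(V_t)\ge\sqrt{2\lambda_{\max}(V_t)}$ for all $t\ge0$.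
   Context: $\mathsf{P}^2_+$ denotes the set of real positive semidefinite $2\times2$ matrices; $\lambda_{\min},\lambda_{\max}$ are the minimal and maximal eigenvalues. *)

From HB Require Import structures.
From mathcomp Require Import all_boot all_order all_algebra.
From mathcomp Require Import boolp classical_sets reals.
Set Implicit Arguments. Unset Strict Implicit. Unset Printing Implicit Defensive.
Import Order.TTheory GRing.Theory Num.Theory.
Local Open Scope ring_scope.
Local Open Scope classical_set_scope.

Section Defs.
Variable R : realType.

Definition dot2 (u v : 'rV[R]_2) : R := (u *m v^T) 0 0.

Definition psd2 (X : 'M[R]_2) : Prop :=
  X^T = X /\ forall x : 'rV[R]_2, 0 <= (x *m X *m x^T) 0 0.

(* minimal / maximal eigenvalue (eigenvalue from mxalgebra).
   Chosen by xget among the eigenvalues; meaningful when eigenvalues exist,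
   e.g. for symmetric real matrices. *)
Definition lambda_min (X : 'M[R]_2) : R :=
  xget 0 [set l | eigenvalue X l /\ forall m, eigenvalue X m -> l <= m].
Definition lambda_max (X : 'M[R]_2) : R :=
  xget 0 [set l | eigenvalue X l /\ forall m, eigenvalue X m -> m <= l].

Definition a_plus (c v : 'rV[R]_2) (l : R) : 'rV[R]_2 :=
  (Num.sqrt (1 + 2 * dot2 c v / Num.sqrt l + 1 / l))^-1
    *: (c + (Num.sqrt l)^-1 *: v).
Definition a_minus (c v : 'rV[R]_2) (l : R) : 'rV[R]_2 :=
  (Num.sqrt (1 - 2 * dot2 c v / Num.sqrt l + 1 / l))^-1
    *: (c - (Num.sqrt l)^-1 *: v).

Definition outer (a : 'rV[R]_2) : 'M[R]_2 := a^T *m a.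

End Defs.

From HB Require Import structures.
From mathcomp Require Import all_boot all_order all_algebra.
From mathcomp Require Import boolp classical_sets reals.
From mathcomp Require Import ring lra.
Set Implicit Arguments. Unset Strict Implicit. Unset Printing Implicit Defensive.
Import Order.TTheory GRing.Theory Num.Theory.
Local Open Scope ring_scope.

(* By induction on t, V t stays symmetric, lambda_min (V t) never decreases, and
   lambda_min (V t) ^ 2 >= 2 lambda_max (V t).  The eigenvalues of a symmetric
   2x2 matrix are the roots of x^2 - tr x + det.  In the orthonormal eigenframe
   (u, v) of V t, with v the lambda_min-eigenvector, the update adds omega P where
   P = a+ a+^T + a- a-^T has trace 2, P_vv (l + 1) >= 2 and (l + 1) det P = 2 P_uu,
   with l = lambda_min (V t).  This gives an explicit m >= l below the new smaller
   root with m^2 + 2 m >= 2 tr, which restores the invariant.  The assumptions on C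
   and lambda0 are only used to get 4 omega <= (l - 2) l. *)

Section ScalarInequalities.
Variable R : realFieldType.

Lemma quad2_ge0 (a b c x y : R) :
  0 <= a + c -> b ^+ 2 <= a * c -> 0 <= a * x ^+ 2 + 2 * b * x * y + c * y ^+ 2.
Proof.
move=> tr_ge0 det_ge0.
have key : (a + c) * (a * x ^+ 2 + 2 * b * x * y + c * y ^+ 2)
  = (a * x + b * y) ^+ 2 + (b * x + c * y) ^+ 2 + (a * c - b ^+ 2) * (x ^+ 2 + y ^+ 2).
  by ring.
have [tr_gt0|tr_le0] := ltrP 0 (a + c).
  rewrite -(pmulr_rge0 _ tr_gt0) key.
  by apply: addr_ge0; [apply: addr_ge0|apply: mulr_ge0; rewrite ?subr_ge0 ?addr_ge0];
    rewrite ?sqr_ge0.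
have [a0 c0] : a = 0 /\ c = 0 by nra.
have b0 : b = 0 by apply/eqP; rewrite -sqrf_eq0 eq_le sqr_ge0 andbT; nra.
by rewrite a0 b0 c0; lra.
Qed.

Lemma update_norms_gt0 (al d s : R) : al ^+ 2 + d ^+ 2 = 1 -> 0 < s < 1 ->
  0 < al ^+ 2 + (d + s) ^+ 2 /\ 0 < al ^+ 2 + (d - s) ^+ 2.
Proof.
move=> unit_ad /andP[s_gt0 s_lt1].
have d_ge : -1 <= d by nra.
have d_le : d <= 1 by nra.
split; nra.
Qed.

Lemma update_coefs (l al d s ip im : R) :
  al ^+ 2 + d ^+ 2 = 1 -> s ^+ 2 * l = 1 ->
  ip * (al ^+ 2 + (d + s) ^+ 2) = 1 -> im * (al ^+ 2 + (d - s) ^+ 2) = 1 ->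
  let p := al ^+ 2 * (ip + im) in
  let q := (d + s) ^+ 2 * ip + (d - s) ^+ 2 * im in
  let r := al * ((d + s) * ip + (d - s) * im) in
  [/\ 0 <= p, p + q = 2, 2 <= q * (l + 1) & (l + 1) * (p * q - r ^+ 2) = 2 * p].
Proof.
move=> unit_ad sl hip him p q r.
have al2 : al ^+ 2 = 1 - d ^+ 2 by lra.
have ipim_gt0 : 0 < ip * im.
  have : 0 <= al ^+ 2 + (d + s) ^+ 2 by apply: addr_ge0; apply: sqr_ge0.
  have : 0 <= al ^+ 2 + (d - s) ^+ 2 by apply: addr_ge0; apply: sqr_ge0.
  by move=> *; apply: mulr_gt0; nra.
have sum_ipim : ip + im = 2 * (1 + s ^+ 2) * (ip * im).
  transitivity (im * (ip * (al ^+ 2 + (d + s) ^+ 2)) + ip * (im * (al ^+ 2 + (d - s) ^+ 2))).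
    by rewrite hip him; ring.
  by rewrite al2; ring.
have prod_ipim : ip * im * ((1 + s ^+ 2) ^+ 2 - 4 * s ^+ 2 * d ^+ 2) = 1.
  transitivity (ip * (al ^+ 2 + (d + s) ^+ 2) * (im * (al ^+ 2 + (d - s) ^+ 2))).
    by rewrite al2; ring.
  by rewrite hip him mulr1.
have pq : p + q = 2.
  transitivity (ip * (al ^+ 2 + (d + s) ^+ 2) + im * (al ^+ 2 + (d - s) ^+ 2)).
    by rewrite /p /q; ring.
  by rewrite hip him.
have p_small : p * (1 + s ^+ 2) <= 2.
  have : 2 * (ip * im * ((1 + s ^+ 2) ^+ 2 - 4 * s ^+ 2 * d ^+ 2)) - p * (1 + s ^+ 2)
         = 2 * (ip * im) * (d * (1 - s ^+ 2)) ^+ 2.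
    by rewrite /p sum_ipim al2; ring.
  rewrite prod_ipim mulr1; have := sqr_ge0 (d * (1 - s ^+ 2)); nra.
split => //.
- by rewrite /p; apply: mulr_ge0; [exact: sqr_ge0 | nra].
- have l_gt0 : 0 < l by nra.
  have : p * (1 + s ^+ 2) * l = p * (l + s ^+ 2 * l) by ring.
  rewrite sl; nra.
- have -> : p * q - r ^+ 2 = 4 * s ^+ 2 * al ^+ 2 * (ip * im) by rewrite /p /q /r; ring.
  transitivity (4 * al ^+ 2 * (ip * im) * (s ^+ 2 * l + s ^+ 2)); first by ring.
  by rewrite sl /p sum_ipim; ring.
Qed.

Lemma min_root_witness (l L w p q r : R) :
  0 <= l -> l <= L -> 2 * L <= l ^+ 2 -> 0 <= w -> 4 * w <= (l - 2) * l ->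
  0 <= p -> p + q = 2 -> 2 <= q * (l + 1) -> (l + 1) * (p * q - r ^+ 2) = 2 * p ->
  let T := L + l + 2 * w in
  let D := (L + w * p) * (l + w * q) - (w * r) ^+ 2 in
  exists2 m, l <= m &
    [/\ 2 * m <= T, 0 <= m ^+ 2 - T * m + D & 2 * T <= m ^+ 2 + 2 * m].
Proof.
move=> l_ge0 lL Ll w_ge0 w_small p_ge0 pq q_big detP T D.
have l1_gt0 : 0 < l + 1 by lra.
have [e [e_ge0 e_big e_w e_L]] : exists e : R, [/\ 0 <= e,
    4 * w + 2 * L - l ^+ 2 <= 2 * (l + 1) * e, e * (l + 1) <= 2 * w & e <= L - l].
  (* e makes the linear part in e of (l + e)^2 + 2 (l + e) - 2 T nonnegative. *)
  have [small|large] := lerP (4 * w + 2 * L - l ^+ 2) 0.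
    by exists 0; split; lra.
  exists ((4 * w + 2 * L - l ^+ 2) / (2 * (l + 1))).
  have e_def : (4 * w + 2 * L - l ^+ 2) / (2 * (l + 1)) * (2 * (l + 1))
             = 4 * w + 2 * L - l ^+ 2 by rewrite mulfVK // gt_eqF // mulr_gt0.
  split; [apply: divr_ge0; lra | nra | nra | nra].
exists (l + e); first lra.
split.
- rewrite /T; nra.
- have -> : (l + e) ^+ 2 - T * (l + e) + D
          = (L - l - e) * (w * q - e) + w * (w * (p * q - r ^+ 2) - e * p).
    by rewrite /T /D -pq; ring.
  apply: addr_ge0; apply: mulr_ge0; nra.
- rewrite /T; nra.
Qed.
End ScalarInequalities.

Section RealClosedInequalities.
Variable R : rcfType.

Lemma sqr_invsqrt_mul (x : R) : 0 < x -> (Num.sqrt x)^-1 ^+ 2 * x = 1.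
Proof. by move=> x_gt0; rewrite exprVn sqr_sqrtr ?ltW // mulVf // gt_eqF. Qed.

Lemma weight_bound (C l L w : R) : 0 <= C -> 2 * Num.sqrt 2 * C + 2 <= l ->
  2 * L <= l ^+ 2 -> w <= C * Num.sqrt L -> 4 * w <= (l - 2) * l.
Proof.
move=> C_ge0 l_big Ll wC.
have sqrt2_sq : Num.sqrt 2 ^+ 2 = 2 :> R by rewrite sqr_sqrtr.
have sqrt2L : Num.sqrt 2 * Num.sqrt L <= l.
  rewrite -sqrtrM // -[l]ger0_norm -?sqrtr_sqr ?ler_wsqrtr //.
  by have := mulr_ge0 (sqrtr_ge0 2) C_ge0; lra.
have sqrt2C_ge0 := mulr_ge0 (sqrtr_ge0 2) C_ge0.
have sqrt2L_ge0 := mulr_ge0 (sqrtr_ge0 2) (sqrtr_ge0 L).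
have split4 : 4 * (C * Num.sqrt L) = 2 * Num.sqrt 2 * C * (Num.sqrt 2 * Num.sqrt L).
  by transitivity (2 * Num.sqrt 2 ^+ 2 * C * Num.sqrt L); [rewrite sqrt2_sq|]; ring.
have : 2 * Num.sqrt 2 * C * (Num.sqrt 2 * Num.sqrt L) <= (l - 2) * (Num.sqrt 2 * Num.sqrt L).
  by apply: ler_wpM2r => //; lra.
have : (l - 2) * (Num.sqrt 2 * Num.sqrt L) <= (l - 2) * l by apply: ler_wpM2l => //; lra.
lra.
Qed.

End RealClosedInequalities.

Lemma lift0_ord2 : lift ord0 ord0 = 1 :> 'I_2. Proof. exact: val_inj. Qed.

Section Matrix2.
Variable R : fieldType.
Implicit Types M : 'M[R]_2.

Lemma mxtrace2 M : \tr M = M 0 0 + M 1 1.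
Proof. by rewrite /mxtrace !big_ord_recl big_ord0 addr0 lift0_ord2. Qed.

Lemma det_mx2 M : \det M = M 0 0 * M 1 1 - M 0 1 * M 1 0.
Proof.
rewrite (expand_det_row _ 0) !big_ord_recl big_ord0 addr0 /cofactor !det_mx11 !mxE /=.
rewrite expr0 expr1 mul1r mulN1r mulrN lift0_ord2 (_ : lift 1 0 = 0 :> 'I_2) //.
exact: val_inj.
Qed.

Lemma char_poly_mx2 M x : (char_poly M).[x] = x ^+ 2 - \tr M * x + \det M.
Proof.
rewrite horner_coef size_char_poly !big_ord_recl big_ord0 /=.
have := char_poly_monic M; rewrite monicE lead_coefE size_char_poly => /eqP /= ->.
rewrite char_poly_det (char_poly_trace M) //= /bump /=.
by rewrite expr0 expr1 mulr1 mul1r addr0; ring.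
Qed.

Lemma eigenvalue_mx2 M x : eigenvalue M x = (x ^+ 2 - \tr M * x + \det M == 0).
Proof. by rewrite eigenvalue_root_char rootE char_poly_mx2. Qed.

End Matrix2.

Section SymmetricEigenvalues2.
Variable R : rcfType.
Implicit Types M : 'M[R]_2.

Definition disc2 M := (\tr M / 2) ^+ 2 - \det M.
Definition eig_min2 M := \tr M / 2 - Num.sqrt (disc2 M).
Definition eig_max2 M := \tr M / 2 + Num.sqrt (disc2 M).

Lemma sym2_entry M : M^T = M -> M 1 0 = M 0 1.
Proof. by move=> symM; rewrite -[in LHS]symM mxE. Qed.

Lemma disc2_sym M : M^T = M -> disc2 M = ((M 0 0 - M 1 1) / 2) ^+ 2 + M 0 1 ^+ 2.
Proof. by move=> /sym2_entry symM; rewrite /disc2 mxtrace2 det_mx2 symM; field. Qed.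

Lemma disc2_ge0 M : M^T = M -> 0 <= disc2 M.
Proof. by move=> /disc2_sym ->; apply: addr_ge0; apply: sqr_ge0. Qed.

Lemma eig_min2_le_max2 M : eig_min2 M <= eig_max2 M.
Proof. by have := sqrtr_ge0 (disc2 M); rewrite /eig_min2 /eig_max2; lra. Qed.

Lemma eig_min2_add_max2 M : eig_min2 M + eig_max2 M = \tr M.
Proof. by rewrite /eig_min2 /eig_max2; field. Qed.

Lemma char2_sym M x : M^T = M ->
  x ^+ 2 - \tr M * x + \det M = (x - eig_min2 M) * (x - eig_max2 M).
Proof.
move=> /disc2_ge0 /sqr_sqrtr disc_sq; rewrite /eig_min2 /eig_max2.
transitivity ((x - \tr M / 2) ^+ 2 - disc2 M); first by rewrite /disc2; field.
by move: disc_sq; set r := Num.sqrt _ => <-; ring.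
Qed.

Lemma eigenvalue_sym2 M x : M^T = M ->
  eigenvalue M x = (x == eig_min2 M) || (x == eig_max2 M).
Proof. by move=> symM; rewrite eigenvalue_mx2 char2_sym // mulf_eq0 !subr_eq0. Qed.

Lemma eig_min2_ge M m : 2 * m <= \tr M -> 0 <= m ^+ 2 - \tr M * m + \det M ->
  m <= eig_min2 M.
Proof.
move=> m_small char_ge0.
have : Num.sqrt (disc2 M) <= \tr M / 2 - m.
  rewrite -[X in _ <= X]ger0_norm; last lra.
  rewrite -sqrtr_sqr ler_wsqrtr // /disc2.
  have : m ^+ 2 - \tr M * m + \det M = (\tr M / 2 - m) ^+ 2 - (\tr M / 2) ^+ 2 + \det M by field.
  lra.
rewrite /eig_min2; lra.
Qed.

Lemma eig2_scalar (a : R) : eig_min2 a%:M = a /\ eig_max2 a%:M = a.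
Proof.
have disc0 : disc2 a%:M = 0 by rewrite /disc2 mxtrace_scalar det_scalar; field.
by rewrite /eig_min2 /eig_max2 disc0 mxtrace_scalar sqrtr0 subr0 addr0; split; field.
Qed.

End SymmetricEigenvalues2.

Section RealMatrices2.
Variable R : realType.
Implicit Types (M X : 'M[R]_2) (x y : 'rV[R]_2).

Lemma lambda_min_sym2 M : M^T = M -> lambda_min M = eig_min2 M.
Proof.
move=> symM; apply: xget_unique.
  split; first by rewrite eigenvalue_sym2 // eqxx.
  by move=> m; rewrite eigenvalue_sym2 // => /orP[] /eqP ->; rewrite ?eig_min2_le_max2.
move=> m [+ min_m]; rewrite eigenvalue_sym2 // => /orP[/eqP //|/eqP m_max].
apply/eqP; rewrite eq_le min_m; last by rewrite eigenvalue_sym2 // eqxx.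
by rewrite m_max eig_min2_le_max2.
Qed.

Lemma lambda_max_sym2 M : M^T = M -> lambda_max M = eig_max2 M.
Proof.
move=> symM; apply: xget_unique.
  split; first by rewrite eigenvalue_sym2 // eqxx orbT.
  by move=> m; rewrite eigenvalue_sym2 // => /orP[] /eqP ->; rewrite ?eig_min2_le_max2.
move=> m [+ max_m]; rewrite eigenvalue_sym2 // => /orP[/eqP m_min|/eqP //].
apply/eqP; rewrite eq_le max_m ?andbT; last by rewrite eigenvalue_sym2 // eqxx orbT.
by rewrite m_min eig_min2_le_max2.
Qed.

Definition bform x X y : R := (x *m X *m y^T) 0 0.

Lemma dot2E x y : dot2 x y = x 0 0 * y 0 0 + x 0 1 * y 0 1.
Proof. by rewrite /dot2 !mxE !big_ord_recl big_ord0 addr0 !mxE lift0_ord2. Qed.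

Lemma bformE x X y : bform x X y =
  x 0 0 * (X 0 0 * y 0 0 + X 0 1 * y 0 1) + x 0 1 * (X 1 0 * y 0 0 + X 1 1 * y 0 1).
Proof.
rewrite /bform !mxE !big_ord_recl !big_ord0 !addr0 !mxE !big_ord_recl !big_ord0 !addr0.
rewrite lift0_ord2; ring.
Qed.

Lemma dot2C x y : dot2 x y = dot2 y x.
Proof. by rewrite !dot2E; ring. Qed.

Lemma bform_sym M x y : M^T = M -> bform x M y = bform y M x.
Proof. by move=> /sym2_entry symM; rewrite !bformE symM; ring. Qed.

Lemma bform_outer x a y : bform x (outer a) y = dot2 x a * dot2 a y.
Proof. by rewrite bformE !dot2E /outer !mxE !big_ord1 !mxE; ring. Qed.

Lemma bform_update M A B w x y :
  bform x (M + w *: (A + B)) y = bform x M y + w * (bform x A y + bform x B y).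
Proof. by rewrite !bformE !mxE; ring. Qed.

Lemma bform_eigen M l v y : v *m M = l *: v -> bform v M y = l * dot2 v y.
Proof. by move=> eigv; rewrite /bform eigv -scalemxAl mxE. Qed.

Lemma psd2_sym M : M^T = M -> 0 <= eig_min2 M -> psd2 M.
Proof.
move=> symM lmin_ge0; split => // x.
have -> : (x *m M *m x^T) 0 0
    = M 0 0 * x 0 0 ^+ 2 + 2 * M 0 1 * x 0 0 * x 0 1 + M 1 1 * x 0 1 ^+ 2.
  by rewrite -/(bform x M x) bformE (sym2_entry symM); ring.
apply: quad2_ge0.
  by rewrite -mxtrace2 -eig_min2_add_max2; have := eig_min2_le_max2 M; lra.
have := char2_sym 0 symM; rewrite det_mx2 (sym2_entry symM) mulr0 expr0n !subrr add0r.
have := eig_min2_le_max2 M; nra.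
Qed.

Definition perp2 x : 'rV[R]_2 := \row_j (if j == 0 then - x 0 1 else x 0 0).

Lemma dot2_perp2 x : dot2 x (perp2 x) = 0.
Proof. by rewrite dot2E !mxE /=; ring. Qed.

Section OrthonormalFrame.
Variable v : 'rV[R]_2.
Hypothesis unit_v : dot2 v v = 1.
Local Notation u := (perp2 v).

Lemma frame_dot2 x : dot2 v x ^+ 2 + dot2 u x ^+ 2 = dot2 x x.
Proof.
rewrite -[RHS]mul1r -unit_v !dot2E !mxE /=; ring.
Qed.

Lemma frame_mxtrace X : \tr X = bform v X v + bform u X u.
Proof.
rewrite -[LHS]mul1r -unit_v mxtrace2 dot2E !bformE !mxE /=; ring.
Qed.

Lemma frame_det X :
  \det X = bform v X v * bform u X u - bform v X u * bform u X v.
Proof.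
rewrite -[LHS]mul1r -(expr1n _ 2) -unit_v det_mx2 dot2E !bformE !mxE /=; ring.
Qed.

End OrthonormalFrame.

End RealMatrices2.

Section Update.
Variable R : realType.
Variables (M : 'M[R]_2) (c v : 'rV[R]_2) (w : R).
Hypotheses (symM : M^T = M) (unit_c : dot2 c c = 1) (unit_v : dot2 v v = 1).
Hypothesis eigv : v *m M = eig_min2 M *: v.
Hypothesis l_ge2 : 2 <= eig_min2 M.

Local Notation l := (eig_min2 M).
Local Notation L := (eig_max2 M).
Local Notation u := (perp2 v).
Local Notation s := (Num.sqrt l)^-1.
Local Notation al := (dot2 u c).
Local Notation d := (dot2 v c).
Local Notation kp := (Num.sqrt (al ^+ 2 + (d + s) ^+ 2))^-1.
Local Notation km := (Num.sqrt (al ^+ 2 + (d - s) ^+ 2))^-1.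
(* (p, r; r, q) is the matrix of outer (a_plus c v l) + outer (a_minus c v l)
   in the frame (u, v). *)
Local Notation p := (al ^+ 2 * (kp ^+ 2 + km ^+ 2)).
Local Notation q := ((d + s) ^+ 2 * kp ^+ 2 + (d - s) ^+ 2 * km ^+ 2).
Local Notation r := (al * ((d + s) * kp ^+ 2 + (d - s) * km ^+ 2)).
Local Notation N := (M + w *: (outer (a_plus c v l) + outer (a_minus c v l))).

Let unit_ad : al ^+ 2 + d ^+ 2 = 1.
Proof. by rewrite addrC frame_dot2. Qed.

Let l_gt0 : 0 < l.
Proof. exact: lt_le_trans l_ge2. Qed.

Let sl : s ^+ 2 * l = 1.
Proof. exact: sqr_invsqrt_mul. Qed.

Let inv_l : 1 / l = s ^+ 2.
Proof. by rewrite exprVn sqr_sqrtr ?ltW // div1r. Qed.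

Let norms_gt0 : 0 < al ^+ 2 + (d + s) ^+ 2 /\ 0 < al ^+ 2 + (d - s) ^+ 2.
Proof.
apply: update_norms_gt0 unit_ad _.
have s_gt0 : 0 < s by rewrite invr_gt0 sqrtr_gt0.
have : s ^+ 2 * 2 <= 1 by rewrite -[X in _ <= X]sl ler_wpM2l ?sqr_ge0.
by move: s_gt0; nra.
Qed.

Let a_plusE : a_plus c v l = kp *: (c + s *: v).
Proof.
rewrite /a_plus dot2C inv_l; congr ((Num.sqrt _)^-1 *: _).
by transitivity ((al ^+ 2 + d ^+ 2) + 2 * d * s + s ^+ 2); [rewrite unit_ad | ring].
Qed.

Let a_minusE : a_minus c v l = km *: (c - s *: v).
Proof.
rewrite /a_minus dot2C inv_l; congr ((Num.sqrt _)^-1 *: _).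
by transitivity ((al ^+ 2 + d ^+ 2) - 2 * d * s + s ^+ 2); [rewrite unit_ad | ring].
Qed.

Let dot2_update x k t : dot2 x (k *: (c + t *: v)) = k * (dot2 x c + t * dot2 x v).
Proof. by rewrite !dot2E !mxE; ring. Qed.

Let frame_M : [/\ bform v M v = l, bform v M u = 0, bform u M v = 0 & bform u M u = L].
Proof.
have vMv : bform v M v = l by rewrite (bform_eigen _ eigv) unit_v mulr1.
have vMu : bform v M u = 0 by rewrite (bform_eigen _ eigv) dot2_perp2 mulr0.
split => //; first by rewrite bform_sym.
by have := frame_mxtrace unit_v M; rewrite -eig_min2_add_max2 vMv; lra.
Qed.

Let frame_updates :
  [/\ dot2 v (a_plus c v l) = kp * (d + s), dot2 u (a_plus c v l) = kp * al,
      dot2 v (a_minus c v l) = km * (d - s) & dot2 u (a_minus c v l) = km * al].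
Proof.
have uv : dot2 u v = 0 by rewrite dot2C dot2_perp2.
by rewrite a_plusE a_minusE -scaleNr !dot2_update unit_v uv; split; ring.
Qed.

Let frame_N : [/\ bform v N v = l + w * q, bform u N u = L + w * p,
                  bform v N u = w * r & bform u N v = w * r].
Proof.
have [vMv vMu uMv uMu] := frame_M.
have [vap uap vam uam] := frame_updates.
rewrite !bform_update !bform_outer ![dot2 (a_plus _ _ _) _]dot2C.
rewrite ![dot2 (a_minus _ _ _) _]dot2C vMv vMu uMv uMu vap uap vam uam.
by split; ring.
Qed.

Lemma update_eig2 : 0 <= w -> 4 * w <= (l - 2) * l -> 2 * L <= l ^+ 2 ->
  [/\ N^T = N, l <= eig_min2 N & 2 * eig_max2 N <= eig_min2 N ^+ 2].
Proof.
move=> w_ge0 w_small Ll.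
have symN : N^T = N by rewrite linearD linearZ linearD /= /outer !trmx_mul !trmxK symM.
have [vNv uNu vNu uNv] := frame_N.
have [norm_p norm_m] := norms_gt0.
have [p_ge0 pq q_big detP] :=
  update_coefs unit_ad sl (sqr_invsqrt_mul norm_p) (sqr_invsqrt_mul norm_m).
have trN : \tr N = L + l + 2 * w.
  by rewrite (frame_mxtrace unit_v) vNv uNu -pq; ring.
have detN : \det N = (L + w * p) * (l + w * q) - (w * r) ^+ 2.
  by rewrite (frame_det unit_v) vNv uNu vNu uNv; ring.
have [m l_le_m [m_small char_ge0 m_big]] :=
  min_root_witness (ltW l_gt0) (eig_min2_le_max2 M) Ll w_ge0 w_small p_ge0 pq q_big detP.
have m_le : m <= eig_min2 N by apply: eig_min2_ge; rewrite trN ?detN.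
split => //; first exact: le_trans m_le.
have := eig_min2_add_max2 N; rewrite trN.
have := ltW l_gt0; nra.
Qed.

End Update.

Theorem mainTheorem9 (R : realType) (c : nat -> 'rV[R]_2)
  (omega : 'M[R]_2 -> R) (C lambda0 : R)
  (V : nat -> 'M[R]_2) (vmin : nat -> 'rV[R]_2) :
  (forall t, dot2 (c t) (c t) = 1) ->
  0 < C ->
  (forall X, psd2 X -> 0 <= omega X /\ omega X <= C * Num.sqrt (lambda_max X)) ->
  4 * Num.sqrt 2 * C + 2 <= lambda0 ->
  V 0%N = lambda0%:M ->
  (forall t, dot2 (vmin t) (vmin t) = 1 /\
             vmin t *m V t = lambda_min (V t) *: vmin t) ->
  (forall t, V t.+1 = V t + omega (V t) *:
      (outer (a_plus (c t) (vmin t) (lambda_min (V t)))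
       + outer (a_minus (c t) (vmin t) (lambda_min (V t))))) ->
  forall t, Num.sqrt (2 * lambda_max (V t)) <= lambda_min (V t).
Proof.
move=> unit_c C_gt0 omega_bound l0_big V0 eigV V_succ.
have sqrt2C_ge0 : 0 <= Num.sqrt 2 * C by rewrite mulr_ge0 ?sqrtr_ge0 ?ltW.
have invariant t : [/\ (V t)^T = V t, 4 * Num.sqrt 2 * C + 2 <= eig_min2 (V t)
                & 2 * eig_max2 (V t) <= eig_min2 (V t) ^+ 2].
  elim: t => [|t [symV l_big gap]].
    rewrite V0; have [-> ->] := eig2_scalar lambda0.
    by split; [exact: tr_scalar_mx | lra | nra].
  have l_ge2 : 2 <= eig_min2 (V t) by lra.
  have l_bound : 2 * Num.sqrt 2 * C + 2 <= eig_min2 (V t) by lra.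
  have [unit_v] := eigV t; rewrite (lambda_min_sym2 symV) => eigv.
  have [w_ge0] := omega_bound _ (psd2_sym symV (le_trans (ler0n _ 2) l_ge2)).
  rewrite (lambda_max_sym2 symV) => wC.
  have w_small := weight_bound (ltW C_gt0) l_bound gap wC.
  have [symN l_le gapN] := update_eig2 symV (unit_c t) unit_v eigv l_ge2 w_ge0 w_small gap.
  by rewrite V_succ (lambda_min_sym2 symV); split => //; lra.
move=> t; have [symV l_big gap] := invariant t.
rewrite (lambda_max_sym2 symV) (lambda_min_sym2 symV).
by rewrite -[X in _ <= X]ger0_norm -?sqrtr_sqr ?ler_wsqrtr //; lra.
Qed.
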